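(* Consider the system $x^+=f(x,u)$, $y=h(x)$ with $f:\mathcal{X}\times\mathcal{U}\to\mathcal{X}$, $h:\mathcal{X}\to\mathcal{Y}$, $\mathcal{X}\subset\mathbb{R}^n$, $\mathcal{Y}\subset\mathbb{R}^m$, $\mathcal{U}\subset\mathbb{R}^q$. Suppose: (A1) there exists an integer $p\ge1$ such that for every $x\in\mathcal{X}$ the set $[x]_{p-1}$ is either a singleton or empty; and (A2) for all $x,\hat x\in\mathcal{X}$ and all $k\ge0$, $\hat x\in[x]_k^+$ implies $[\hat x]_k^+=[x]_k^+$. With $p$ as in (A1), let $\pi(\hat x,y):=\max\{j\in\{-1,0,\ldots,p-2\}:[\hat x]_j^+\cap h^{-1}(y)\ne\emptyset\}$. Then the system $$\hat x^+\in f\big([\hat x]^+_{\pi(\hat x,y)}\cap h^{-1}(y),\,u\big)$$ is a deadbeat observer for $x^+=f(x,u)$, $y=h(x)$.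
   Context: $h^{-1}(y):=\{\eta\in\mathcal{X}:h(\eta)=y\}$; $f(S,u):=\{f(s,u):s\in S\}$; for a set $S$, $[S]_k:=\bigcup_{s\in S}[s]_k$. Define $[x]_0:=h^{-1}(h(x))$, and for $k\ge0$: $[x]_k^+:=\bigcup_{(\eta,u)\in\mathcal{X}\times\mathcal{U}:\ f(\eta,u)=x} f([\eta]_k,u)$, $[x]_{k+1}:=[x]_k^+\cap[x]_0$; additionally $[x]_{-1}^+:=\mathcal{X}$. For an input sequence $\mathbf{u}=(u_0,u_1,\ldots)$ with $u_k\in\mathcal{U}$, the solution is $\phi(0,x,\mathbf{u})=x$, $\phi(k+1,x,\mathbf{u})=f(\phi(k,x,\mathbf{u}),u_k)$. Given $g:\mathcal{X}\times\mathcal{Y}\times\mathcal{U}\rightrightarrows\mathcal{X}$, a solution of $\hat x^+\in g(\hat x,h(x),u)$ is any sequence $\psi(k,\hat x,x,\mathbf{u})$ with $\psi(0,\hat x,x,\mathbf{u})=\hat x$, $\psi(k+1,\hat x,x,\mathbf{u})\in g(\psi(k,\hat x,x,\mathbf{u}),h(\phi(k,x,\mathbf{u})),u_k)$. The system $\hat x^+\in g(\hat x,y,u)$ is a deadbeat observer for $x^+=f(x,u),\,y=h(x)$ if there is an integer $q\ge1$ such that such solutions satisfy $\psi(k,\hat x,x,\mathbf{u})=\phi(k,x,\mathbf{u})$ for all $x,\hat x\in\mathcal{X}$, all input sequences $\mathbf{u}$, and all $k\ge q$. *)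

(* State space X, output space Y, input space U are abstract types
   (the paper's X ⊂ R^n, Y ⊂ R^m, U ⊂ R^q play no role beyond being sets). *)
From Stdlib Require Import ZArith Lia.
Open Scope Z_scope.

Section Classes.
Context {X Y U : Type} (f : X -> U -> X) (h : X -> Y).

(* cls k x z  <->  z ∈ [x]_k ;  clsplus k x z <-> z ∈ [x]_k^+  (k >= 0) *)
Fixpoint cls (k : nat) (x z : X) : Prop :=
  match k with
  | O => h z = h x
  | S k' => (exists (eta : X) (u : U), f eta u = x /\
               exists s, cls k' eta s /\ z = f s u) /\ h z = h x
  end.

Definition clsplus (k : nat) (x z : X) : Prop :=
  exists (eta : X) (u : U), f eta u = x /\ exists s, cls k eta s /\ z = f s u.

(* [x]_j^+ for integer j >= -1, with [x]_{-1}^+ := X (the whole state space) *)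
Definition clsplusZ (j : Z) (x z : X) : Prop :=
  if j <? 0 then True else clsplus (Z.to_nat j) x z.

Definition is_pi (p : nat) (xh : X) (y : Y) (j : Z) : Prop :=
  -1 <= j <= Z.of_nat p - 2 /\
  (exists z, clsplusZ j xh z /\ h z = y) /\
  (forall j', -1 <= j' <= Z.of_nat p - 2 ->
     (exists z, clsplusZ j' xh z /\ h z = y) -> j' <= j).

Definition observer_map (p : nat) (xh : X) (y : Y) (u : U) (xn : X) : Prop :=
  exists j, is_pi p xh y j /\
    exists s, clsplusZ j xh s /\ h s = y /\ xn = f s u.

Fixpoint phi (k : nat) (x : X) (us : nat -> U) : X :=
  match k with
  | O => x
  | S k' => f (phi k' x us) (us k')
  end.
End Classes.

Definition deadbeat_observer {X Y U : Type} (f : X -> U -> X) (h : X -> Y)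
    (g : X -> Y -> U -> X -> Prop) : Prop :=
  exists q : nat, (1 <= q)%nat /\
    forall (x xh : X) (us : nat -> U) (psi : nat -> X),
      psi O = xh ->
      (forall k, g (psi k) (h (phi f k x us)) (us k) (psi (S k))) ->
      forall k, (q <= k)%nat -> psi k = phi f k x us.

(* If the estimate [xh_k] has the true state [x_k] in its class [[xh_k]_j^+], then
   the output [h x_k] makes [pi(xh_k, h x_k) >= j], and any point [s] the observer
   picks in [[xh_k]_pi^+ ∩ h^{-1}(h x_k)] shares that class and output with [x_k];
   by (A2) this puts [s] in [[x_k]_{j+1}], so [f s u] lies in [[x_{k+1}]_{j+1}^+].
   Hence after [k] steps the true state is in [[xh_k]^+_{min(k-1, p-2)}], and once
   that index is [p-2] the chosen point lies in [[x_k]_{p-1}], a singleton by (A1),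
   so the estimate is exact from step [p] on. *)
From Stdlib Require Import ZArith Lia.

Section Classes.
Context {X Y U : Type} (f : X -> U -> X) (h : X -> Y).

Lemma cls_S_sub (k : nat) (x z : X) : cls f h (S k) x z -> cls f h k x z.
Proof.
  revert x z; induction k as [|k IH]; intros x z [Hpre Hh].
  - exact Hh.
  - split; [|exact Hh].
    destruct Hpre as (eta & u & Heta & s & Hs & Hz).
    exists eta, u; split; [exact Heta|].
    exists s; split; [apply IH; exact Hs | exact Hz].
Qed.

Lemma clsplus_antimono (m n : nat) (x z : X) :
  (m <= n)%nat -> clsplus f h n x z -> clsplus f h m x z.
Proof.
  induction 1 as [|n _ IH]; intros Hz; [exact Hz|].
  apply IH; destruct Hz as (eta & u & Heta & s & Hs & Hz).
  exists eta, u; split; [exact Heta|].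
  exists s; split; [apply cls_S_sub; exact Hs | exact Hz].
Qed.

Lemma clsplusZ_antimono (i j : Z) (x z : X) :
  (i <= j)%Z -> clsplusZ f h j x z -> clsplusZ f h i x z.
Proof.
  unfold clsplusZ; intros Hij.
  destruct (Z.ltb_spec i 0); [tauto|].
  destruct (Z.ltb_spec j 0); [lia|].
  apply clsplus_antimono; lia.
Qed.

Lemma clsplus_image (m : nat) (s z : X) (u : U) :
  cls f h m s z -> clsplus f h m (f s u) (f z u).
Proof. intros Hz; exists s, u; split; [reflexivity|]; exists z; auto. Qed.

Section Consistent.
Hypothesis clsplus_consistent : forall (x xh : X) (k : nat), clsplus f h k x xh ->
  forall z, clsplus f h k xh z <-> clsplus f h k x z.

Lemma cls_of_clsplusZ_same_output (j : Z) (x a b : X) :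
  (-1 <= j)%Z -> clsplusZ f h j x a -> clsplusZ f h j x b -> h a = h b ->
  cls f h (Z.to_nat (j + 1)) a b.
Proof.
  unfold clsplusZ; intros Hj Ha Hb Hab.
  destruct (Z.ltb_spec j 0).
  - replace (j + 1)%Z with 0%Z by lia; simpl; congruence.
  - replace (Z.to_nat (j + 1)) with (S (Z.to_nat j)) by lia.
    split; [|congruence].
    apply (clsplus_consistent x a (Z.to_nat j) Ha); exact Hb.
Qed.

Section ObserverRun.
Variables (p : nat) (x : X) (us : nat -> U) (psi : nat -> X).
Hypothesis p_pos : (1 <= p)%nat.
Hypothesis psi_step : forall k,
  observer_map f h p (psi k) (h (phi f k x us)) (us k) (psi (S k)).

Lemma observer_run_step (k : nat) (j : Z) :
  (-1 <= j <= Z.of_nat p - 2)%Z ->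
  clsplusZ f h j (psi k) (phi f k x us) ->
  clsplusZ f h (j + 1) (psi (S k)) (phi f (S k) x us).
Proof.
  intros Hj Hx.
  destruct (psi_step k) as (pi & (_ & _ & pi_max) & s & Hs & Hhs & ->).
  assert (Hpi : (j <= pi)%Z) by (apply pi_max; [lia | exists (phi f k x us); auto]).
  apply (clsplusZ_antimono j) in Hs; [|exact Hpi].
  unfold clsplusZ; destruct (Z.ltb_spec (j + 1) 0); [exact I|].
  apply clsplus_image, (cls_of_clsplusZ_same_output j (psi k)); tauto.
Qed.

Lemma observer_run_invariant (k : nat) :
  clsplusZ f h (Z.min (Z.of_nat k - 1) (Z.of_nat p - 2)) (psi k) (phi f k x us).
Proof.
  induction k as [|k IH].
  - unfold clsplusZ; destruct (Z.ltb_spec (Z.min (Z.of_nat 0 - 1) (Z.of_nat p - 2)) 0);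
      [exact I | lia].
  - apply (clsplusZ_antimono _ (Z.min (Z.of_nat k - 1) (Z.of_nat p - 2) + 1)); [lia|].
    apply observer_run_step; [lia | exact IH].
Qed.

Hypothesis cls_last_subsingleton :
  forall x z z', cls f h (p - 1) x z -> cls f h (p - 1) x z' -> z = z'.

Lemma observer_run_exact (k : nat) :
  clsplusZ f h (Z.of_nat p - 2) (psi k) (phi f k x us) -> psi (S k) = phi f (S k) x us.
Proof.
  intros Hx.
  destruct (psi_step k) as (pi & (Hpi & _ & pi_max) & s & Hs & Hhs & ->).
  assert (pi = Z.of_nat p - 2)%Z as ->.
  { enough (Z.of_nat p - 2 <= pi)%Z by lia.
    apply pi_max; [lia | exists (phi f k x us); auto]. }
  assert (Hidx : Z.to_nat (Z.of_nat p - 2 + 1) = (p - 1)%nat) by lia.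
  pose proof (cls_of_clsplusZ_same_output (Z.of_nat p - 2) _ _ _ ltac:(lia) Hx Hs (eq_sym Hhs)) as Hs_cls.
  pose proof (cls_of_clsplusZ_same_output (Z.of_nat p - 2) _ _ _ ltac:(lia) Hx Hx eq_refl) as Hx_cls.
  rewrite Hidx in Hs_cls, Hx_cls.
  simpl; f_equal; exact (cls_last_subsingleton _ _ _ Hs_cls Hx_cls).
Qed.

End ObserverRun.
End Consistent.
End Classes.

Theorem theorem4 {X Y U : Type} (f : X -> U -> X) (h : X -> Y) (p : nat) :
  (1 <= p)%nat ->
  (* (A1): [x]_{p-1} is a singleton or empty *)
  (forall x z z', cls f h (p - 1) x z -> cls f h (p - 1) x z' -> z = z') ->
  (* (A2) *)
  (forall (x xh : X) (k : nat), clsplus f h k x xh ->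
     forall z, clsplus f h k xh z <-> clsplus f h k x z) ->
  deadbeat_observer f h (observer_map f h p).
Proof.
  intros p_pos A1 A2.
  exists p; split; [exact p_pos|].
  intros x xh us psi _ psi_step [|k] Hk; [lia|].
  apply (observer_run_exact f h A2 p x us psi p_pos psi_step A1).
  rewrite <- (Z.min_r (Z.of_nat k - 1) (Z.of_nat p - 2)) by lia.
  apply observer_run_invariant; assumption.
Qed.
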